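(* Let $\mathbf{F}\in\mathbb{K}[x]^{n\times n}$ be nonsingular and column reduced, let $\mathbf{H}$ be its Hermite normal form, let $\vec{s}=[s_1,\dots,s_n]$ with $s_i=\deg h_{ii}$, let $s_{\max}=\max_i s_i$ and $\vec{u}=[s_{\max},\dots,s_{\max}]\in\mathbb{Z}^n$. Suppose $\mathbf{N}\in\mathbb{K}[x]^{2n\times n}$ is a $[-\vec{u},-\vec{s}]$-minimal right kernel basis of $[\mathbf{F},-I]\in\mathbb{K}[x]^{n\times 2n}$, partitioned as $\mathbf{N}=\begin{bmatrix}\mathbf{N}_u\\ \mathbf{N}_d\end{bmatrix}$ with $\mathbf{N}_u,\mathbf{N}_d\in\mathbb{K}[x]^{n\times n}$. Then $\mathbf{N}_u$ is unimodular, and $\mathbf{N}_d$ has row degrees $\vec{s}$ (the $i$-th row of $\mathbf{N}_d$ has degree $s_i$) and is unimodularly equivalent to $\mathbf{H}$, i.e. $\mathbf{N}_d=\mathbf{H}\mathbf{V}$ for some unimodular $\mathbf{V}$.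
   Context: $\mathbb{K}$ is a field. Unimodular: square polynomial matrix with determinant a nonzero constant. Hermite normal form of nonsingular $\mathbf{F}$: the unique $\mathbf{H}=\mathbf{F}\mathbf{U}$, $\mathbf{U}$ unimodular, with $\mathbf{H}=[h_{ij}]$ lower triangular, $h_{ii}$ monic, and $\deg h_{ij}<\deg h_{ii}$ for $j<i$. For a column vector $\mathbf{p}=[p_1,\dots,p_m]^T$ and shift $\vec{t}\in\mathbb{Z}^m$, the $\vec t$-column degree is $\mathrm{cdeg}_{\vec t}\,\mathbf{p}=\max_i(\deg p_i+t_i)$; for a matrix it is the list of shifted degrees of its columns. Writing $x^{\vec t}=\mathrm{diag}(x^{t_1},\dots,x^{t_m})$, a matrix $\mathbf{P}$ with $\vec{c}=\mathrm{cdeg}\,\mathbf{P}$ is column reduced if the matrix whose $(i,j)$ entry is the coefficient of $x^{c_j}$ in $p_{ij}$ has full column rank; $\mathbf{P}$ is $\vec t$-column reduced if $x^{\vec t}\mathbf{P}$ is column reduced. A right kernel basis of $\mathbf{A}\in\mathbb{K}[x]^{m\times k}$ is a full-rank matrix $\mathbf{N}$ with $\mathbf{A}\mathbf{N}=0$ whose columns generate the $\mathbb{K}[x]$-module $\{\mathbf{q}\in\mathbb{K}[x]^k:\mathbf{A}\mathbf{q}=0\}$; it is $\vec t$-minimal if it is moreover $\vec t$-column reduced. *)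

From HB Require Import structures.
From mathcomp Require Import all_boot all_order all_algebra.
Set Implicit Arguments. Unset Strict Implicit. Unset Printing Implicit Defensive.
Import Order.TTheory GRing.Theory Num.Theory.
Local Open Scope ring_scope.

Section PolyMat.
Variable K : fieldType.

Definition pdeg (p : {poly K}) : int := ((size p).-1)%:Z.

(* max on int extended with None = -infinity *)
Definition omax (a b : option int) : option int :=
  match a, b with
  | None, y => y
  | x, None => x
  | Some x, Some y => Some (Num.max x y)
  end.

(* t-shifted degree of a vector v = max_i (deg v_i + t_i); None (= -oo) for v = 0 *)
Definition sdeg (m : nat) (t : 'I_m -> int) (v : 'I_m -> {poly K}) : option int :=
  \big[omax/None]_(i | v i != 0) Some (pdeg (v i) + t i).

Definition cdeg (m k : nat) (t : 'I_m -> int) (P : 'M[{poly K}]_(m, k)) (j : 'I_k)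
  : option int := sdeg t (fun i => P i j).

Definition rdeg (m k : nat) (P : 'M[{poly K}]_(m, k)) (i : 'I_m) : option int :=
  sdeg (fun _ => 0) (fun j => P i j).

(* leading coefficient matrix of x^t P: entry (i,j) is the coefficient of
   x^(c_j) in x^(t_i) p_ij, where c_j = cdeg_t column j *)
Definition lcoef_mx (m k : nat) (t : 'I_m -> int) (P : 'M[{poly K}]_(m, k))
  : 'M[K]_(m, k) :=
  \matrix_(i, j)
    match cdeg t P j with
    | Some c => if (P i j != 0) && (pdeg (P i j) + t i == c)
                then lead_coef (P i j) else 0
    | None => 0
    end.

(* P is t-column reduced: x^t P is column reduced *)
Definition scol_reduced (m k : nat) (t : 'I_m -> int) (P : 'M[{poly K}]_(m, k)) : bool :=
  \rank (lcoef_mx t P) == k.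

Definition col_reduced (m k : nat) (P : 'M[{poly K}]_(m, k)) : bool :=
  scol_reduced (fun _ => 0) P.

Definition unimodular (n : nat) (U : 'M[{poly K}]_n) : Prop :=
  size (\det U) = 1%N.

Definition nonsingular (n : nat) (F : 'M[{poly K}]_n) : Prop := \det F != 0.

Definition hermite_form (n : nat) (H : 'M[{poly K}]_n) : Prop :=
  [/\ forall i j : 'I_n, (i < j)%N -> H i j = 0,
      forall i : 'I_n, H i i \is monic &
      forall i j : 'I_n, (j < i)%N -> (size (H i j) < size (H i i))%N].

Definition is_hermite_nf (n : nat) (F H : 'M[{poly K}]_n) : Prop :=
  hermite_form H /\ exists U, unimodular U /\ H = F *m U.

Definition full_col_rank (m k : nat) (N : 'M[{poly K}]_(m, k)) : bool :=
  \rank (map_mx (@tofrac _) N) == k.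

Definition right_kernel_basis (m k l : nat) (A : 'M[{poly K}]_(m, k))
    (N : 'M[{poly K}]_(k, l)) : Prop :=
  [/\ full_col_rank N, A *m N = 0 &
      forall q : 'cV[{poly K}]_k, A *m q = 0 -> exists c : 'cV[{poly K}]_l, q = N *m c].

Definition minimal_right_kernel_basis (m k l : nat) (t : 'I_k -> int)
    (A : 'M[{poly K}]_(m, k)) (N : 'M[{poly K}]_(k, l)) : Prop :=
  right_kernel_basis A N /\ scol_reduced t N.

End PolyMat.

Definition catshift (n1 n2 : nat) (a : 'I_n1 -> int) (b : 'I_n2 -> int)
  (i : 'I_(n1 + n2)) : int :=
  match split i with inl j => a j | inr j => b j end.

(* Since [I; F] lies in the kernel of [F, -I], it equals N C for some C, so
   Nu C = I and Nu is unimodular; then Nd = F Nu = H V with V := U^-1 Nu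
   unimodular, where F U = H.  Everything else is the predictable degree
   property of shifted column reduced matrices: F column reduced forces
   deg U <= smax, so [U; H] = N V^-1 has nonpositive [-u,-s]-column degrees;
   H is -s-column reduced with leading matrix I, so the columns of N = [U; H] V
   have nonnegative shifted degrees.  Hence V^-1, and so V, is constant, and
   row i of H V has degree s_i because its coefficient of x^(s_i) is row i of V. *)

From HB Require Import structures.
From mathcomp Require Import all_boot all_order all_algebra.
From mathcomp Require Import zify.
Set Implicit Arguments. Unset Strict Implicit. Unset Printing Implicit Defensive.
Import Order.TTheory GRing.Theory Num.Theory.
Local Open Scope ring_scope.

Lemma omaxA : associative omax.
Proof. by case=> [a|] [b|] [c|] //=; rewrite maxA. Qed.

Lemma omaxC : commutative omax.
Proof. by case=> [a|] [b|] //=; rewrite maxC. Qed.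

Lemma omax0l : left_id None omax.
Proof. by case. Qed.

HB.instance Definition _ :=
  Monoid.isComLaw.Build (option int) None omax omaxA omaxC omax0l.

Lemma col_mulmx (R : pzSemiRingType) m k p (A : 'M[R]_(m, k)) (B : 'M_(k, p)) j :
  col j (A *m B) = A *m col j B.
Proof. by rewrite !colE mulmxA. Qed.

Lemma mulmx_entry_neq0 (R : pzSemiRingType) m k p (A : 'M[R]_(m, k)) (B : 'M_(k, p))
    i j :
  (A *m B) i j != 0 -> exists l, A i l * B l j != 0.
Proof.
rewrite mxE => nz; apply/existsP; apply: contraNT nz => /existsPn h0.
by rewrite big1 // => l _; apply/eqP/negPn/h0.
Qed.

Lemma unitmx_col_neq0 (R : comUnitRingType) n (V : 'M[R]_n) k :
  V \in unitmx -> col k V != 0.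
Proof.
move=> Vu; apply/eqP => V0.
have := congr1 (col k) (mulVmx Vu); rewrite col_mulmx V0 mulmx0 => /matrixP/(_ k 0).
by rewrite !mxE eqxx => /eqP; rewrite eq_sym oner_eq0.
Qed.

Lemma unitmx_row_neq0 (R : comUnitRingType) n (V : 'M[R]_n) i :
  V \in unitmx -> row i V != 0.
Proof.
move=> Vu; apply/eqP => V0.
have := congr1 (row i) (mulmxV Vu); rewrite row_mul V0 mul0mx => /matrixP/(_ 0 i).
by rewrite !mxE eqxx => /eqP; rewrite eq_sym oner_eq0.
Qed.

Lemma catshiftL n1 n2 (a : 'I_n1 -> int) (b : 'I_n2 -> int) i :
  catshift a b (lshift n2 i) = a i.
Proof. by rewrite /catshift; have /= -> := @unsplitK n1 n2 (inl i). Qed.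

Lemma catshiftR n1 n2 (a : 'I_n1 -> int) (b : 'I_n2 -> int) i :
  catshift a b (rshift n1 i) = b i.
Proof. by rewrite /catshift; have /= -> := @unsplitK n1 n2 (inr i). Qed.

Section ShiftedDegrees.
Variable K : fieldType.
Implicit Types p q : {poly K}.

Lemma pdeg0 : pdeg (0 : {poly K}) = 0.
Proof. by rewrite /pdeg size_poly0. Qed.

Lemma pdeg_le_size p (d : nat) : (pdeg p <= d%:Z) = (size p <= d.+1)%N.
Proof. by rewrite /pdeg lez_nat; case: (size p). Qed.

Section Sdeg.
Variables (m : nat) (t : 'I_m -> int) (v : 'I_m -> {poly K}).

Lemma sdeg_ge i :
  v i != 0 -> exists c, sdeg t v = Some c /\ pdeg (v i) + t i <= c.
Proof.
move=> vi; rewrite /sdeg (bigD1 i) //=.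
case: (\big[omax/None]_(j | _) _) => [x|] /=; last by exists (pdeg (v i) + t i).
by eexists; split; [reflexivity | rewrite le_max lexx].
Qed.

Lemma sdeg_le c i : sdeg t v = Some c -> v i != 0 -> pdeg (v i) + t i <= c.
Proof. by move=> h /sdeg_ge[c' []]; rewrite h => -[->]. Qed.

Lemma sdeg_attained c :
  sdeg t v = Some c -> exists i, v i != 0 /\ pdeg (v i) + t i = c.
Proof.
rewrite /sdeg; elim/big_rec: _ c => // i x vi IH c.
case: x IH => [x|] IH /=; last by case=> <-; exists i.
case=> <-; have [_|_] := leP (pdeg (v i) + t i) x; [exact: IH | by exists i].
Qed.

Lemma sdegE c i :
  v i != 0 -> pdeg (v i) + t i = c ->
  (forall j, v j != 0 -> pdeg (v j) + t j <= c) -> sdeg t v = Some c.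
Proof.
move=> vi ei hle; have [c' [hc' _]] := sdeg_ge vi.
have [j [vj ej]] := sdeg_attained hc'.
by rewrite hc' -ej; congr Some; apply/eqP; rewrite eq_le hle //= ej -ei sdeg_le.
Qed.

End Sdeg.

(* The coefficient of x^N in p q when N + t is the largest shifted degree the
   product can reach: only the leading terms of degree-extremal factors count. *)
Lemma coefM_shifted p q (t c D : int) (N : nat) :
  (p != 0 -> pdeg p + t <= c) -> (q != 0 -> pdeg q + c <= D) -> N%:Z + t = D ->
  (p * q)`_N =
    (if (p != 0) && (pdeg p + t == c) then lead_coef p else 0) *
    (if (q != 0) && (pdeg q + c == D) then lead_coef q else 0).
Proof.
have [->|p0] := eqVneq p 0; first by rewrite mul0r coef0 mul0r.
have [->|q0] := eqVneq q 0; first by rewrite mulr0 coef0 mulr0.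
move=> /(_ isT) hp /(_ isT) hq eN.
have spq : size (p * q) = ((size p).-1 + (size q).-1).+1.
  rewrite size_mul //; move: p0 q0; rewrite -!size_poly_gt0.
  by case: (size p) => // a _; case: (size q) => // b _; rewrite addnS.
have [/andP[/eqP e1 /eqP e2]|nboth] := boolP ((pdeg p + t == c) && (pdeg q + c == D)).
  rewrite e1 e2 !eqxx -lead_coefM lead_coefE spq /=; congr (_`_ _).
  apply/eqP; rewrite -eqz_nat PoszD; apply/eqP; move: e1 e2 eN; rewrite /pdeg.
  by move: (size p).-1 (size q).-1 => a b; lia.
have -> : (if pdeg p + t == c then lead_coef p else 0) *
          (if pdeg q + c == D then lead_coef q else 0) = 0.
  by move: nboth; do 2 case: (_ == _); rewrite ?mulr0 ?mul0r.
apply: nth_default; rewrite spq -ltz_nat PoszD.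
move/nandP: nboth => [] /eqP ne; move: hp hq eN ne; rewrite /pdeg.
  all: by move: (size p).-1 (size q).-1 => a b; lia.
Qed.

Section ColumnReduced.
Variables (m k : nat) (t : 'I_m -> int) (P : 'M[{poly K}]_(m, k)).
Hypothesis Pred : scol_reduced t P.

Lemma lcoef_mx_inj (a : 'cV[K]_k) : lcoef_mx t P *m a = 0 -> a = 0.
Proof.
have rf : row_free (lcoef_mx t P)^T by rewrite /row_free mxrank_tr (eqP Pred).
move=> ha; apply: trmx_inj; apply: (row_free_inj rf).
by rewrite -trmx_mul ha !linear0 mul0mx.
Qed.

Lemma scol_reduced_cdeg l : exists c, cdeg t P l = Some c.
Proof.
case h: (cdeg t P l) => [c|]; first by exists c.
have : lcoef_mx t P *m delta_mx l (0 : 'I_1) = 0.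
  by rewrite -colE; apply/matrixP => i j; rewrite !mxE h.
by move/lcoef_mx_inj/matrixP/(_ l 0); rewrite !mxE !eqxx => /eqP; rewrite oner_eq0.
Qed.

Let ct j := odflt 0 (cdeg t P j).

Let cdeg_ct j : cdeg t P j = Some (ct j).
Proof. by rewrite /ct; have [c ->] := scol_reduced_cdeg j. Qed.

Let lead_vec (D : int) (w : 'cV[{poly K}]_k) : 'cV[K]_k :=
  \col_j (if (w j 0 != 0) && (pdeg (w j 0) + ct j == D) then lead_coef (w j 0) else 0).

Let coef_mulmx (w : 'cV[{poly K}]_k) D i (N : nat) :
  sdeg ct (fun j => w j 0) = Some D -> N%:Z + t i = D ->
  ((P *m w) i 0)`_N = (lcoef_mx t P *m lead_vec D w) i 0.
Proof.
move=> hD eN; rewrite !mxE coef_sum; apply: eq_bigr => j _; rewrite !mxE cdeg_ct.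
apply: coefM_shifted eN => [nz|nz]; last exact: sdeg_le hD nz.
exact: sdeg_le (cdeg_ct j) nz.
Qed.

(* Predictable degree property: the t-shifted degree of P w is the maximum over
   l of deg w_l + cdeg_t of column l, as the leading coefficients cannot cancel. *)
Lemma predictable_degree (w : 'cV[{poly K}]_k) l c :
  w l 0 != 0 -> cdeg t P l = Some c ->
  exists i, (P *m w) i 0 != 0 /\ pdeg (w l 0) + c <= pdeg ((P *m w) i 0) + t i.
Proof.
move=> wl hc; have [D [hD leD]] := @sdeg_ge _ ct (fun j => w j 0) l wl.
rewrite /ct hc /= in leD.
have a0 : lead_vec D w != 0.
  have [j [wj ej]] := sdeg_attained hD; apply/cV0Pn; exists j.
  by rewrite mxE wj ej eqxx /= lead_coef_eq0.
have /cV0Pn[i hi] : lcoef_mx t P *m lead_vec D w != 0.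
  by apply: contra a0 => /eqP/lcoef_mx_inj ->.
have [N eN] : exists N : nat, N%:Z + t i = D.
  have [j] := mulmx_entry_neq0 hi; rewrite !mxE cdeg_ct mulf_eq0 negb_or.
  case: ifP => [/andP[_ /eqP e1]|]; last by rewrite eqxx.
  case: ifP => [/andP[_ /eqP e2]|]; last by rewrite eqxx andbF.
  exists (addn (size (P i j)).-1 (size (w j 0)).-1); move: e1 e2; rewrite /pdeg PoszD.
  by move: (size _).-1 (size _).-1 => a b; lia.
rewrite -(coef_mulmx hD eN) in hi.
exists i; split; first by apply: contraNneq hi => ->; rewrite coef0.
apply: le_trans leD _; rewrite -eN lerD2r /pdeg lez_nat.
move: hi; apply: contraNT; rewrite -ltnNge => h; apply/eqP/nth_default.
by move: h; case: (size _).
Qed.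

End ColumnReduced.

Lemma unimodularE n (A : 'M[{poly K}]_n) : unimodular A <-> A \in unitmx.
Proof.
rewrite /unimodular unitmxE poly_unitE; split; last by case/andP => /eqP.
move=> h; rewrite h eqxx /= unitfE.
by have := lead_coef_eq0 (\det A); rewrite lead_coefE -size_poly_eq0 h => ->.
Qed.

Lemma right_kernel_basis_mulmx m k l r (A : 'M[{poly K}]_(m, k)) (N : 'M_(k, l))
    (Q : 'M_(k, r)) :
  right_kernel_basis A N -> A *m Q = 0 -> exists C, Q = N *m C.
Proof.
move=> [_ _ gen] AQ.
have /fin_all_exists[c hc] : forall j, exists c, col j Q = N *m c.
  by move=> j; apply: gen; rewrite -col_mulmx AQ; apply/matrixP => i i'; rewrite !mxE.
exists (\matrix_(i, j) c j i 0); apply/matrixP => i j.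
by have /matrixP/(_ i 0) := hc j; rewrite !mxE => ->; apply: eq_bigr => u _; rewrite !mxE.
Qed.

Lemma graph_kernel_basis n (F Nu Nd : 'M[{poly K}]_n) :
  right_kernel_basis (row_mx F (- 1%:M)) (col_mx Nu Nd) ->
  Nd = F *m Nu /\ Nu \in unitmx.
Proof.
have kerE m (X : 'M_(n, m)) Y : row_mx F (- 1%:M) *m col_mx X Y = F *m X - Y.
  by rewrite mul_row_col mulNmx mul1mx.
move=> kerN; case: (kerN) => _ + _; rewrite kerE => /eqP; rewrite subr_eq0 => /eqP <-.
split=> //; have [|C] := right_kernel_basis_mulmx kerN (Q := col_mx 1%:M F).
  by rewrite kerE mulmx1 subrr.
by rewrite mul_col_mx => /eq_col_mx[/esym/mulmx1_unit[]].
Qed.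

Lemma scol_reduced_mulmx_size_le1 m k r (t : 'I_m -> int) (P : 'M[{poly K}]_(m, k))
    (W : 'M_(k, r)) :
  scol_reduced t P -> (forall l c, cdeg t P l = Some c -> 0 <= c) ->
  (forall i j, (P *m W) i j != 0 -> pdeg ((P *m W) i j) + t i <= 0) ->
  forall l j, (size (W l j) <= 1)%N.
Proof.
move=> Pred c_ge0 PW_le l j; have [->|nz] := eqVneq (W l j) 0; first by rewrite size_poly0.
have [c hc] := scol_reduced_cdeg Pred l.
have [|i []] := predictable_degree Pred (w := col j W) _ hc; first by rewrite mxE.
rewrite -col_mulmx [col j W l 0]mxE [col j _ i 0]mxE => /PW_le le0 le.
rewrite -(pdeg_le_size _ 0).
by move: le0 le (c_ge0 _ _ hc); move: (pdeg _) (pdeg _) => a b; lia.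
Qed.

Lemma col_reduced_mulmx_pdeg_le m k r (F : 'M[{poly K}]_(m, k)) (U : 'M_(k, r))
    (d : nat) :
  col_reduced F -> (forall i j, pdeg ((F *m U) i j) <= d%:Z) ->
  forall l j, pdeg (U l j) <= d%:Z.
Proof.
move=> Fred FU_le l j; have [->|nz] := eqVneq (U l j) 0; first by rewrite pdeg0.
have [c hc] := scol_reduced_cdeg Fred l.
have [i0 [_ ec]] := sdeg_attained hc; rewrite addr0 in ec.
have [|i [_]] := predictable_degree Fred (w := col j U) _ hc; first by rewrite mxE.
rewrite -col_mulmx [col j U l 0]mxE [col j _ i 0]mxE addr0 -ec; move: (FU_le i j).
by rewrite /pdeg; move: (size _).-1 (size _).-1 (size _).-1 => a b e; lia.
Qed.

Lemma scol_reduced_mulmx_unit_ge0 m k (t : 'I_m -> int) (P : 'M[{poly K}]_(m, k))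
    (V : 'M_k) :
  scol_reduced t P -> (forall l, cdeg t P l = Some 0) -> V \in unitmx ->
  forall j, exists i, (P *m V) i j != 0 /\ 0 <= pdeg ((P *m V) i j) + t i.
Proof.
move=> Pred c0 Vu j; have /cV0Pn[l Vl] := unitmx_col_neq0 j Vu.
have [i [nz le]] := predictable_degree Pred Vl (c0 l).
rewrite -col_mulmx [col j _ i 0]mxE [col j V l 0]mxE addr0 in nz le.
by exists i; split=> //; apply: le_trans le.
Qed.

Section Hermite.
Variables (n : nat) (H : 'M[{poly K}]_n).
Hypothesis hH : hermite_form H.

Local Notation s i := (size (H i i)).-1.

Lemma hermite_diag_neq0 i : H i i != 0.
Proof. by case: hH => _ monH _; apply: monic_neq0. Qed.

Lemma hermite_size_diag i : size (H i i) = (s i).+1.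
Proof. by rewrite prednK // size_poly_gt0 hermite_diag_neq0. Qed.

Lemma hermite_offdiag_size i j :
  i != j -> H i j != 0 -> (size (H i j) < size (H i i))%N.
Proof.
case: hH => upper _ lower; rewrite neq_ltn => /orP[ij|ji] nz; last exact: lower.
by rewrite upper // eqxx in nz.
Qed.

Lemma hermite_pdeg_le i j : pdeg (H i j) <= (s i)%:Z.
Proof.
rewrite pdeg_le_size -hermite_size_diag.
have [<-|ij] := eqVneq i j; first by [].
have [->|nz] := eqVneq (H i j) 0; first by rewrite size_poly0.
exact/ltnW/hermite_offdiag_size.
Qed.

Lemma hermite_cdeg j : cdeg (fun i => - (s i)%:Z) H j = Some 0.
Proof.
apply: (sdegE (i := j)); [exact: hermite_diag_neq0 | by rewrite subrr |].
by move=> i _; rewrite subr_le0 hermite_pdeg_le.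
Qed.

Lemma hermite_lcoef_mx : lcoef_mx (fun i => - (s i)%:Z) H = 1%:M.
Proof.
apply/matrixP => i j; rewrite !mxE hermite_cdeg subr_eq0.
have [<-|ij] := eqVneq i j.
  by rewrite hermite_diag_neq0 eqxx; case: hH => _ /(_ i)/monicP.
case: eqVneq => [->|nz]; rewrite ?andbF //=.
have := hermite_offdiag_size ij nz; rewrite hermite_size_diag /pdeg eqz_nat.
move=> lt /=; case: eqP => // e.
by move: lt; rewrite -e prednK ?ltnn // size_poly_gt0.
Qed.

Lemma hermite_scol_reduced : scol_reduced (fun i => - (s i)%:Z) H.
Proof. by rewrite /scol_reduced hermite_lcoef_mx mxrank1. Qed.

(* The coefficient of x^(s i) in row i of H B is row i of B, which is nonzero. *)
Lemma hermite_mulmx_const_rdeg (B : 'M[K]_n) i :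
  B \in unitmx -> rdeg (H *m map_mx polyC B) i = Some (s i)%:Z.
Proof.
move=> Bu; have coefHB j N : ((H *m map_mx polyC B) i j)`_N = \sum_k (H i k)`_N * B k j.
  by rewrite !mxE coef_sum; apply: eq_bigr => k _; rewrite mxE coefMC.
have sizeHB j : (size ((H *m map_mx polyC B) i j) <= (s i).+1)%N.
  apply/leq_sizeP => N hN; rewrite coefHB big1 // => k _.
  by rewrite nth_default ?mul0r // (leq_trans _ hN) // -pdeg_le_size hermite_pdeg_le.
have topHB j : ((H *m map_mx polyC B) i j)`_(s i) = B i j.
  rewrite coefHB (bigD1 i) //= big1 ?addr0 => [|k ki].
    by case: hH => _ /(_ i)/monicP; rewrite lead_coefE => ->; rewrite mul1r.
  have [->|nz] := eqVneq (H i k) 0; first by rewrite coef0 mul0r.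
  rewrite nth_default ?mul0r //.
  by have := hermite_offdiag_size _ nz; rewrite eq_sym hermite_size_diag ltnS; apply.
have /rV0Pn[j Bij] := unitmx_row_neq0 i Bu; rewrite mxE in Bij.
apply: (sdegE (i := j)) => [|| l _]; rewrite ?addr0.
- by apply: contraNneq Bij => HB0; rewrite -topHB HB0 coef0.
- have lt : (s i < size ((H *m map_mx polyC B) i j))%N.
    by rewrite ltnNge; apply: contra Bij => le; rewrite -topHB nth_default.
  move: (sizeHB j) lt; rewrite /pdeg; case: (size _) => // z.
  by rewrite !ltnS => le ge; congr Posz; apply/anti_leq/andP.
- by rewrite pdeg_le_size.
Qed.

End Hermite.

End ShiftedDegrees.

Theorem mainTheorem2 (K : fieldType) (n : nat) (F H Nu Nd : 'M[{poly K}]_n) :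
  nonsingular F -> col_reduced F -> is_hermite_nf F H ->
  let s : 'I_n -> nat := fun i => (size (H i i)).-1 in
  let smax : nat := (\max_(i < n) s i)%N in
  minimal_right_kernel_basis
    (catshift (fun _ : 'I_n => - (smax%:Z)) (fun i => - ((s i)%:Z)))
    (row_mx F (- 1%:M)) (col_mx Nu Nd) ->
  [/\ unimodular Nu,
      forall i : 'I_n, rdeg Nd i = Some ((s i)%:Z) &
      exists V : 'M[{poly K}]_n, unimodular V /\ Nd = H *m V].
Proof.
move=> _ Fred [hH [U [/unimodularE Uu HFU]]] s smax [kerN Nred].
set t := catshift _ _ in Nred *.
have [eNd Nuu] := graph_kernel_basis kerN.
pose V := invmx U *m Nu.
have Vu : V \in unitmx by rewrite unitmx_mul unitmx_inv Uu.
have eNdV : Nd = H *m V by rewrite /V HFU mulmxA mulmxK // eNd.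
have eNuV : Nu = U *m V by rewrite /V mulmxA mulmxV // mul1mx.
have Udeg l j : pdeg (U l j) <= smax%:Z.
  apply: col_reduced_mulmx_pdeg_le Fred _ l j => i j'; rewrite -HFU.
  by apply: le_trans (hermite_pdeg_le hH i j') _; rewrite lez_nat; apply: leq_bigmax.
have Ncdeg_ge0 l c : cdeg t (col_mx Nu Nd) l = Some c -> 0 <= c.
  move=> hc; have [i [nz le]] :=
    scol_reduced_mulmx_unit_ge0 (hermite_scol_reduced hH) (hermite_cdeg hH) Vu l.
  have := sdeg_le (i := rshift n i) hc; rewrite col_mxEd /t catshiftR eNdV => /(_ nz).
  exact: le_trans le.
have /(scol_reduced_mulmx_size_le1 Nred Ncdeg_ge0) Vi_const : forall i j,
    (col_mx Nu Nd *m invmx V) i j != 0 -> pdeg ((col_mx Nu Nd *m invmx V) i j) + t i <= 0.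
  rewrite eNuV eNdV -mul_col_mx mulmxK // => i j _.
  case: (split_ordP i) => k ->; rewrite ?col_mxEu ?col_mxEd /t ?catshiftL ?catshiftR subr_le0.
    exact: Udeg.
  exact: hermite_pdeg_le.
pose B := map_mx (coefp 0) (invmx V).
have VB : V = map_mx polyC (invmx B).
  rewrite map_invmx -[V]invmxK; congr invmx; apply/matrixP => i j.
  by rewrite !mxE; apply: size1_polyC.
have Bu : invmx B \in unitmx by rewrite -(map_unitmx polyC) -VB.
split; first exact/unimodularE.
  by move=> i; rewrite eNdV VB hermite_mulmx_const_rdeg.
by exists V; split=> //; apply/unimodularE.
Qed.
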